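(* Let $n\geqslant 2$ and $\alpha\in\mathbf{I}\mathbb{N}_{\infty}^n$. Then there exist unique elements $\sigma_l,\sigma_r$ of the group of units $H(\mathbb{I})$ of $\mathbf{I}\mathbb{N}_{\infty}^n$ such that $\sigma_l\alpha$ and $\alpha\sigma_r$ are idempotents of $\mathbf{I}\mathbb{N}_{\infty}^n$.
   Context: $\mathbb{N}=\{1,2,3,\ldots\}$, $n\geqslant 2$, and $\mathbb{N}^n$ carries the Euclidean metric $d$. A partial isometry of $\mathbb{N}^n$ is an injective partial map $\alpha\colon\mathbb{N}^n\rightharpoonup\mathbb{N}^n$ with $d((\mathbf{x})\alpha,(\mathbf{y})\alpha)=d(\mathbf{x},\mathbf{y})$ for all $\mathbf{x},\mathbf{y}\in\operatorname{dom}\alpha$; it is cofinite if $\mathbb{N}^n\setminus\operatorname{dom}\alpha$ and $\mathbb{N}^n\setminus\operatorname{ran}\alpha$ are finite. $\mathbf{I}\mathbb{N}_{\infty}^n$ is the monoid of all partial cofinite isometries of $\mathbb{N}^n$ under composition of partial maps written on the right: $\mathbf{x}(\alpha\beta)=(\mathbf{x}\alpha)\beta$ with $\operatorname{dom}(\alpha\beta)=\{\mathbf{x}\in\operatorname{dom}\alpha\colon \mathbf{x}\alpha\in\operatorname{dom}\beta\}$. Its identity is the identity map $\mathbb{I}$ of $\mathbb{N}^n$ and $H(\mathbb{I})$ is its group of units. *)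

From mathcomp Require Import all_boot.
Set Implicit Arguments. Unset Strict Implicit. Unset Printing Implicit Defensive.

(* Points of Z^n represented by {ffun 'I_n -> nat}; the points of N^n
   (N = {1,2,...}) are those with all coordinates positive. *)
Definition pt (n : nat) := {ffun 'I_n -> nat}.
Definition inN n (x : pt n) : bool := [forall i, 0 < x i].

Definition absdiff (a b : nat) : nat := (a - b) + (b - a).
Definition d2 n (x y : pt n) : nat := \sum_(i < n) (absdiff (x i) (y i)) ^ 2.

Definition pmapN n := pt n -> option (pt n).

Definition in_dom n (a : pmapN n) (x : pt n) : Prop := exists y, a x = Some y.
Definition in_ran n (a : pmapN n) (y : pt n) : Prop := exists x, a x = Some y.

Definition partial_map_of_Nn n (a : pmapN n) : Prop :=
  (forall x y, a x = Some y -> inN x /\ inN y).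
Definition pinjective n (a : pmapN n) : Prop :=
  forall x y z, a x = Some z -> a y = Some z -> x = y.
Definition pisometry n (a : pmapN n) : Prop :=
  forall x y x' y', a x = Some x' -> a y = Some y' -> d2 x' y' = d2 x y.
Definition cofinite n (a : pmapN n) : Prop :=
  (exists s : seq (pt n), forall x, inN x -> ~ in_dom a x -> x \in s) /\
  (exists s : seq (pt n), forall y, inN y -> ~ in_ran a y -> y \in s).

Definition INinf n (a : pmapN n) : Prop :=
  [/\ partial_map_of_Nn a, pinjective a, pisometry a & cofinite a].

(* composition written on the right: x (a b) = (x a) b *)
Definition pcompN n (a b : pmapN n) : pmapN n :=
  fun x => match a x with Some y => b y | None => None end.

Definition pidN n : pmapN n := fun x => if inN x then Some x else None.

Definition peq n (a b : pmapN n) : Prop := forall x, a x = b x.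

Definition unitH n (s : pmapN n) : Prop :=
  INinf s /\ exists t, INinf t /\ peq (pcompN s t) (@pidN n) /\ peq (pcompN t s) (@pidN n).

Definition idempotentI n (e : pmapN n) : Prop := INinf e /\ peq (pcompN e e) e.

From mathcomp Require Import all_boot all_algebra all_fingroup.
From mathcomp Require Import zify ring.
From Stdlib Require Import Classical.
Import GRing.Theory Num.Theory.
Set Implicit Arguments. Unset Strict Implicit. Unset Printing Implicit Defensive.

(* Every alpha in I N^n_oo (n >= 2) is the restriction of the inverse of a
   coordinate permutation pi, and sigma_l = sigma_r = pi. Points far from the
   origin lie in dom alpha, so a base point p0 and its neighbours p0 + e_i
   have images; by isometry the vectors alpha(p0 + e_i) - alpha(p0) form an
   orthonormal integer frame, i.e. a signed permutation of the standard basis,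
   and polarization makes alpha affine with this linear part. Points of
   dom alpha, resp. ran alpha, with i-th coordinate 1 (they exist because
   n >= 2 lets another coordinate be large) force every sign to be + and the
   translation to vanish. For uniqueness, a unit is an isometry of N^n, hence
   determined by its values far out, where idempotency forces it to agree
   with pi. *)

Section IntegerGeometry.
Variable n : nat.
Local Open Scope ring_scope.
Implicit Types (x y z p w : pt n) (u v : 'I_n -> int).

Definition dz x y (j : 'I_n) : int := (x j)%:Z - (y j)%:Z.
Definition dotz u v : int := \sum_j u j * v j.

Lemma dotzC u v : dotz u v = dotz v u.
Proof. by apply: eq_bigr => j _; rewrite mulrC. Qed.

Lemma absdiff_sq a b : (absdiff a b ^ 2)%N%:Z = (a%:Z - b%:Z) ^+ 2.
Proof. by rewrite /absdiff expr2; case: (leqP a b) => h; nia. Qed.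

Lemma d2E x y : (d2 x y)%:Z = dotz (dz x y) (dz x y).
Proof.
rewrite /d2 -natz natr_sum; apply: eq_bigr => j _.
by rewrite natz absdiff_sq expr2.
Qed.

Lemma dotz_polar x y p :
  2 * dotz (dz x p) (dz y p) = (d2 x p)%:Z + (d2 y p)%:Z - (d2 x y)%:Z.
Proof.
rewrite !d2E /dotz mulr_sumr -big_split -sumrB /=.
by apply: eq_bigr => j _; rewrite /dz; ring.
Qed.

Definition shiftp w (i : 'I_n) : pt n := [ffun j => (w j + (j == i))%N].

Lemma dz_shift_self w i : dz (shiftp w i) w i = 1.
Proof. by rewrite /dz ffunE eqxx PoszD addrAC subrr. Qed.

Lemma dotz_dz_shift w i u : dotz (dz (shiftp w i) w) u = u i.
Proof.
rewrite /dotz (bigD1 i) //= dz_shift_self mul1r big1 ?addr0 // => j /negbTE ji.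
by rewrite /dz ffunE ji addn0 subrr mul0r.
Qed.

Lemma d2_shift x w i :
  (d2 x (shiftp w i))%:Z = (d2 x w)%:Z + 1 - 2 * dz x w i.
Proof.
have := dotz_polar x (shiftp w i) w.
rewrite [Posz (d2 (shiftp w i) w)]d2E dotzC !dotz_dz_shift dz_shift_self.
by move=> ->; ring.
Qed.

Lemma eq_pt_of_far_d2 x z (K : nat) :
  (forall w, (forall j, K <= w j)%N -> d2 x w = d2 z w) -> x = z.
Proof.
move=> eq_d2; apply/ffunP => j.
pose w : pt n := [ffun=> K].
have far_w : forall k, (K <= w k)%N by move=> k; rewrite ffunE.
have far_wj : forall k, (K <= shiftp w j k)%N by move=> k; rewrite !ffunE leq_addr.
move: (eq_d2 _ far_w) (eq_d2 _ far_wj) => /(congr1 Posz) e0 /(congr1 Posz).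
rewrite !d2_shift e0 /dz => e1.
have : (x j)%:Z = (z j)%:Z by lia.
by case.
Qed.

Definition signed_unit u (k : 'I_n) : Prop :=
  (u k = 1 \/ u k = -1) /\ forall j, j != k -> u j = 0.

Lemma dotz_signed_unit u v k : signed_unit v k -> dotz u v = u k * v k.
Proof.
move=> [_ v0]; rewrite /dotz (bigD1 k) //= big1 ?addr0 // => j /v0 ->.
by rewrite mulr0.
Qed.

Lemma mul_self_ge0 (c : int) : 0 <= c * c.
Proof. by rewrite -expr2 sqr_ge0. Qed.

Lemma dotz_self_eq1 u : dotz u u = 1 -> exists k, signed_unit u k.
Proof.
have [k uk | u0] := pickP (fun j => u j != 0); last first.
  by rewrite /dotz big1 // => j _; move/negbFE/eqP: (u0 j) => ->.
rewrite /dotz (bigD1 k) //=; set rest := \sum_(j < n | j != k) _ => uu1.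
have rest_ge0 : 0 <= rest by apply: sumr_ge0 => j _; apply: mul_self_ge0.
have uk_ge1 : 1 <= u k * u k by move: uk; nia.
have rest0 : rest = 0 by lia.
exists k; split; first by move: uu1; rewrite rest0; nia.
move=> j jk; have /eqP := psumr_eq0P (fun i _ => mul_self_ge0 (u i)) rest0 jk.
by rewrite mulf_eq0 orbb => /eqP.
Qed.

Lemma orthonormal_int_frame (v : 'I_n -> 'I_n -> int) :
  (forall i k, dotz (v i) (v k) = (i == k)%:R) ->
  exists tau : {perm 'I_n}, forall i, signed_unit (v i) (tau i).
Proof.
move=> orth; pose tf i := odflt i [pick k | v i k != 0].
have tfP i : signed_unit (v i) (tf i).
  have [k [vk1 vk0]] : exists k, signed_unit (v i) k.
    by apply: dotz_self_eq1; rewrite orth eqxx.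
  suff -> : tf i = k by [].
  rewrite /tf; case: pickP => [k' vk'|v0] /=.
    by apply: contraTeq vk' => /vk0 ->.
  by have := v0 k; case: vk1 => ->.
have tf_inj : injective tf.
  move=> i k tfik; apply/eqP; apply: contraT => ik.
  have := orth i k; rewrite (negbTE ik) (dotz_signed_unit _ (tfP k)) -tfik.
  by case: (tfP i).1 => ->; case: (tfP k).1; rewrite -tfik => ->.
by exists (perm tf_inj) => i; rewrite permE.
Qed.

End IntegerGeometry.

Section CoordinatePermutations.
Variable n : nat.
Implicit Types (t : {perm 'I_n}) (y : pt n).

Definition coord_perm t y : pt n := [ffun i => y (t i)].
Definition perm_map t : pmapN n := fun y => if inN y then Some (coord_perm t y) else None.

Lemma coord_permK t : cancel (coord_perm t) (coord_perm t^-1).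
Proof. by move=> y; apply/ffunP => i; rewrite !ffunE permKV. Qed.

Lemma coord_permKV t : cancel (coord_perm t^-1) (coord_perm t).
Proof. by move=> y; apply/ffunP => i; rewrite !ffunE permK. Qed.

Lemma coord_perm_inj t : injective (coord_perm t).
Proof. exact: can_inj (coord_permK t). Qed.

Lemma inN_coord_perm t y : inN (coord_perm t y) = inN y.
Proof.
apply/forallP/forallP => pos i; last by rewrite ffunE.
by have := pos (t^-1 i)%g; rewrite ffunE permKV.
Qed.

Lemma d2_coord_perm t x y : d2 (coord_perm t x) (coord_perm t y) = d2 x y.
Proof.
rewrite /d2 [RHS](reindex_inj (@perm_inj _ t)) /=.
by apply: eq_bigr => i _; rewrite !ffunE.
Qed.

Lemma perm_mapE t y : inN y -> perm_map t y = Some (coord_perm t y).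
Proof. by rewrite /perm_map => ->. Qed.

Lemma INinf_perm_map t : INinf (perm_map t).
Proof.
split.
- by move=> x y; rewrite /perm_map; case: ifP => // pos [<-]; rewrite inN_coord_perm.
- move=> x y z; rewrite /perm_map; case: ifP => // _ [<-]; case: ifP => // _ [].
  by move/coord_perm_inj.
- move=> x y x' y'; rewrite /perm_map; case: ifP => // _ [<-]; case: ifP => // _ [<-].
  exact: d2_coord_perm.
- split; exists [::] => x pos []; first by exists (coord_perm t x); rewrite perm_mapE.
  by exists (coord_perm t^-1 x); rewrite perm_mapE ?coord_permKV // inN_coord_perm.
Qed.

Lemma unitH_perm_map t : unitH (perm_map t).
Proof.
split; first exact: INinf_perm_map.
exists (perm_map t^-1); split; first exact: INinf_perm_map.
split => x; rewrite /pcompN /perm_map /pidN; case: ifP => // pos.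
  by rewrite inN_coord_perm pos coord_permK.
by rewrite inN_coord_perm pos coord_permKV.
Qed.

End CoordinatePermutations.

Section Units.
Variables (n : nat) (t : pmapN n).
Hypothesis t_unit : unitH t.

Lemma unitH_total y : inN y -> exists w, t y = Some w.
Proof.
move: t_unit => [_ [t' [_ [tt' _]]]] pos; move: (tt' y); rewrite /pcompN /pidN pos.
by case: (t y) => [w|] // _; exists w.
Qed.

Lemma unitH_onto w : inN w -> exists y, t y = Some w.
Proof.
move: t_unit => [_ [t' [_ [_ t't]]]] pos; move: (t't w); rewrite /pcompN /pidN pos.
by case: (t' w) => [y|] // tyw; exists y.
Qed.

Lemma unitH_out y : ~~ inN y -> t y = None.
Proof.
move: t_unit => [[t_map _ _ _] _] out; case ty: (t y) => [w|] //.
by have [pos _] := t_map _ _ ty; rewrite pos in out.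
Qed.

End Units.

Lemma unitH_eq_of_far n (t u : pmapN n) (K : nat) :
  unitH t -> unitH u ->
  (forall w : pt n, (forall j, K <= w j) -> exists y, t y = Some w /\ u y = Some w) ->
  peq t u.
Proof.
move=> t_unit u_unit agree y; have [pos|out] := boolP (inN y); last first.
  by rewrite !unitH_out.
have [[w ty] [w' uy]] := (unitH_total t_unit pos, unitH_total u_unit pos).
rewrite ty uy; congr Some; apply: (@eq_pt_of_far_d2 _ _ _ K) => v far_v.
have [y' [ty' uy']] := agree v far_v.
have [[[_ _ t_iso _] _] [[_ _ u_iso _] _]] := (t_unit, u_unit).
by rewrite (t_iso _ _ _ _ ty ty') (u_iso _ _ _ _ uy uy').
Qed.

Lemma idempotentI_partial_id n (e : pmapN n) :
  (forall y z, e y = Some z -> z = y /\ inN y) ->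
  (exists s : seq (pt n), forall x, inN x -> ~ in_dom e x -> x \in s) ->
  idempotentI e.
Proof.
move=> e_id [s e_dom]; split; last first.
  move=> x; rewrite /pcompN; case ex: (e x) => [y|] //.
  by case: (e_id _ _ ex) => yx _; subst y.
split.
- by move=> x y /e_id [-> pos].
- by move=> x y z /e_id [-> _] /e_id [-> _].
- by move=> x y x' y' /e_id [-> _] /e_id [-> _].
- split; exists s => // x pos not_ran; apply: e_dom => // -[y ex]; apply: not_ran.
  by case: (e_id _ _ ex) => yx _; subst y; exists x.
Qed.

Lemma idempotentI_fix n (e : pmapN n) y z : idempotentI e -> e y = Some z -> z = y.
Proof.
move=> [[_ e_inj _ _] ee] ey; have := ee y; rewrite /pcompN ey => ez.
exact: e_inj ez ey.
Qed.

Lemma far_of_cofinite n (P : pt n -> Prop) (s : seq (pt n)) :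
  (forall x, inN x -> ~ P x -> x \in s) ->
  exists K, forall x j, inN x -> K < x j -> P x.
Proof.
move=> cof; exists (\max_(x <- s) \max_(j < n) x j) => x j pos far.
apply: NNPP => notP; move: far; apply/negP; rewrite -leqNgt.
apply: leq_trans (leq_bigmax j) _.
exact: (leq_bigmax_seq (F := fun y : pt n => \max_(j < n) y j) _ (cof x pos notP)).
Qed.

Definition pt_with n (i : 'I_n) (c K : nat) : pt n := [ffun j => if j == i then c else K].

Lemma exists_other n (i : 'I_n) : 1 < n -> exists j : 'I_n, j != i.
Proof.
move=> n_gt1; have /card_gt0P [j] : 0 < #|[set~ i]|.
  by rewrite cardsC1 card_ord -subn1 subn_gt0.
by rewrite in_setC1; exists j.
Qed.

Lemma pt_with_far n (i : 'I_n) c K :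
  1 < n -> 0 < c -> inN (pt_with i c K.+1) /\ exists j, K < pt_with i c K.+1 j.
Proof.
move=> n_gt1 c_gt0; split; first by apply/forallP => j; rewrite ffunE; case: ifP.
by have [j ji] := exists_other i n_gt1; exists j; rewrite ffunE (negbTE ji).
Qed.

Section IsometryStructure.
Variables (n : nat) (a : pmapN n) (Kd Kr : nat).
Hypotheses (n_gt1 : 1 < n) (a_map : partial_map_of_Nn a) (a_iso : pisometry a).
Hypothesis dom_far : forall x j, inN x -> Kd < x j -> in_dom a x.
Hypothesis ran_far : forall y j, inN y -> Kr < y j -> in_ran a y.

Lemma dom_with_coord i c : 0 < c -> exists x z, a x = Some z /\ x i = c.
Proof.
move=> c_gt0; have [pos [j far]] := pt_with_far i Kd n_gt1 c_gt0.
by have [z az] := dom_far pos far; exists (pt_with i c Kd.+1), z; rewrite ffunE eqxx.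
Qed.

Lemma ran_with_coord k c : 0 < c -> exists x z, a x = Some z /\ z k = c.
Proof.
move=> c_gt0; have [pos [j far]] := pt_with_far k Kr n_gt1 c_gt0.
by have [x ax] := ran_far pos far; exists x, (pt_with k c Kr.+1); rewrite ffunE eqxx.
Qed.

Local Open Scope ring_scope.

Lemma pisometry_dotz x y p x' y' p' :
  a x = Some x' -> a y = Some y' -> a p = Some p' ->
  dotz (dz x' p') (dz y' p') = dotz (dz x p) (dz y p).
Proof.
move=> ax ay ap; apply: (@mulfI _ 2) => //.
by rewrite !dotz_polar (a_iso ax ap) (a_iso ay ap) (a_iso ax ay).
Qed.

Let p0 : pt n := [ffun=> Kd.+1].
Let img x := odflt x (a x).

Lemma img_far (x : pt n) : (forall j, Kd < x j)%N -> a x = Some (img x).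
Proof.
move=> far; have pos : inN x by apply/forallP => j; apply: leq_trans (far j).
by have [z ax] := dom_far pos (far (Ordinal (ltnW n_gt1))); rewrite /img ax.
Qed.

Lemma far_p0 j : (Kd < p0 j)%N.
Proof. by rewrite ffunE. Qed.

Lemma far_shift_p0 i j : (Kd < shiftp p0 i j)%N.
Proof. by rewrite !ffunE ltn_addr. Qed.

Let frame i := dz (img (shiftp p0 i)) (img p0).

Lemma frame_orthonormal i k : dotz (frame i) (frame k) = (i == k)%:R.
Proof.
have := pisometry_dotz (img_far (far_shift_p0 i)) (img_far (far_shift_p0 k)).
move=> /(_ _ _ (img_far far_p0)) ->.
rewrite dotz_dz_shift /dz ffunE PoszD addrAC subrr add0r.
by rewrite eq_sym; case: (k == i).
Qed.

Lemma dotz_frame x z i :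
  a x = Some z -> dotz (dz z (img p0)) (frame i) = (x i)%:Z - (Kd.+1)%:Z.
Proof.
move=> ax; rewrite (pisometry_dotz ax (img_far (far_shift_p0 i)) (img_far far_p0)).
by rewrite dotzC dotz_dz_shift /dz ffunE.
Qed.

Lemma coord_eq_of_signed_shift i k (e : int) (c : nat) :
  e = 1 \/ e = -1 ->
  (forall x z, a x = Some z -> ((z k)%:Z - c%:Z) * e = (x i)%:Z - (Kd.+1)%:Z) ->
  forall x z, a x = Some z -> z k = x i.
Proof.
move=> e_sign shift.
have pos x z : a x = Some z -> (0 < x i)%N /\ (0 < z k)%N.
  by move/a_map => [/forallP xpos /forallP zpos].
have e1 : e = 1.
  case: e_sign => // e_neg.
  (* with sign -1, the point with x i = c + Kd.+1 would be sent to z k = 0 *)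
  have [x [z [ax xi]]] := dom_with_coord i (ltn0Sn (c + Kd)).
  by move: (shift _ _ ax) (pos _ _ ax); rewrite e_neg xi; lia.
have c_ge : (Kd < c)%N.
  have [x [z [ax xi]]] := dom_with_coord i (ltn0Sn 0).
  by move: (shift _ _ ax) (pos _ _ ax); rewrite e1 xi; lia.
have c_le : (c <= Kd.+1)%N.
  have [x [z [ax zk]]] := ran_with_coord k (ltn0Sn 0).
  by move: (shift _ _ ax) (pos _ _ ax); rewrite e1 zk; lia.
by move=> x z ax; move: (shift _ _ ax); rewrite e1; lia.
Qed.

Lemma isometry_coord_perm :
  exists tau : {perm 'I_n}, forall x z, a x = Some z -> coord_perm tau z = x.
Proof.
have [tau frame_unit] := orthonormal_int_frame frame_orthonormal.
exists tau => x z az; apply/ffunP => i; rewrite ffunE.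
apply: (coord_eq_of_signed_shift (frame_unit i).1 _ az) => x' z' az'.
by rewrite -(dotz_frame i az') (dotz_signed_unit _ (frame_unit i)).
Qed.

End IsometryStructure.

Section PermutationInverses.
Variables (n : nat) (a : pmapN n) (tau : {perm 'I_n}).
Hypotheses (n_gt0 : 0 < n) (a_map : partial_map_of_Nn a).
Hypothesis a_perm : forall x z, a x = Some z -> coord_perm tau z = x.

Lemma idempotentI_perm_map_comp (s : seq (pt n)) :
  (forall x, inN x -> ~ in_dom a x -> x \in s) ->
  idempotentI (pcompN (perm_map tau) a).
Proof.
move=> a_dom; apply: idempotentI_partial_id.
  move=> y z; rewrite /pcompN /perm_map; case: ifP => // pos az; split => //.
  by apply: (@coord_perm_inj _ tau); rewrite (a_perm az).
exists (map (coord_perm tau^-1) s) => y pos not_dom.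
rewrite -[y](coord_permK tau); apply/map_f/a_dom; first by rewrite inN_coord_perm.
by case=> z az; apply: not_dom; exists z; rewrite /pcompN perm_mapE.
Qed.

Lemma idempotentI_comp_perm_map (s : seq (pt n)) :
  (forall x, inN x -> ~ in_dom a x -> x \in s) ->
  idempotentI (pcompN a (perm_map tau)).
Proof.
move=> a_dom; apply: idempotentI_partial_id.
  move=> x z; rewrite /pcompN; case ax: (a x) => [w|] //.
  have [pos wpos] := a_map ax.
  by rewrite perm_mapE // => -[<-]; split; first exact: a_perm.
exists s => x pos not_dom; apply: a_dom => // -[w ax]; apply: not_dom.
by have [_ wpos] := a_map ax; exists (coord_perm tau w); rewrite /pcompN ax perm_mapE.
Qed.

Lemma unitH_left_idempotent_eq K t :
  (forall x j, inN x -> K < x j -> in_dom a x) ->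
  unitH t -> idempotentI (pcompN t a) -> peq t (perm_map tau).
Proof.
move=> dom_far t_unit ta_idem.
apply: (unitH_eq_of_far (K := K.+1) t_unit (unitH_perm_map tau)) => w far.
have pos : inN w by apply/forallP => j; apply: leq_trans (far j).
have [y ty] := unitH_onto t_unit pos.
have [[[t_map _ _ _] _] [z aw]] := (t_unit, dom_far _ (Ordinal n_gt0) pos (far _)).
have [ypos _] := t_map _ _ ty.
have zy : z = y by apply: idempotentI_fix ta_idem _; rewrite /pcompN ty.
by exists y; split; rewrite // perm_mapE // -zy (a_perm aw).
Qed.

Lemma unitH_right_idempotent_eq K t :
  (forall y j, inN y -> K < y j -> in_ran a y) ->
  unitH t -> idempotentI (pcompN a t) -> peq t (perm_map tau).
Proof.
move=> ran_far t_unit at_idem.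
apply: (unitH_eq_of_far (K := K.+1) t_unit (unitH_perm_map tau)) => w far.
pose y := coord_perm tau^-1 w.
have far_y j : K < y j by rewrite ffunE.
have ypos : inN y by apply/forallP => j; apply: leq_trans (far_y j).
have [x ax] := ran_far _ (Ordinal n_gt0) ypos (far_y _).
have [w' ty] := unitH_total t_unit ypos.
have w'x : w' = x by apply: idempotentI_fix at_idem _; rewrite /pcompN ax.
by exists y; rewrite perm_mapE // coord_permKV ty w'x -(a_perm ax) coord_permKV.
Qed.

End PermutationInverses.

Theorem lemma3p4 (n : nat) (hn : 2 <= n) (a : pmapN n) (ha : INinf a) :
  (exists sl, unitH sl /\ idempotentI (pcompN sl a) /\
     forall t, unitH t -> idempotentI (pcompN t a) -> peq t sl) /\
  (exists sr, unitH sr /\ idempotentI (pcompN a sr) /\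
     forall t, unitH t -> idempotentI (pcompN a t) -> peq t sr).
Proof.
have [a_map _ a_iso [[sd a_dom] [sr a_ran]]] := ha.
have [Kd dom_far] := far_of_cofinite a_dom.
have [Kr ran_far] := far_of_cofinite a_ran.
have [tau a_perm] := isometry_coord_perm hn a_map a_iso dom_far ran_far.
have n_gt0 : 0 < n by apply: ltnW.
split; exists (perm_map tau); split; try exact: unitH_perm_map.
- split; first exact: (idempotentI_perm_map_comp a_perm a_dom).
  by move=> t; apply: (unitH_left_idempotent_eq n_gt0 a_perm dom_far).
- split; first exact: (idempotentI_comp_perm_map a_map a_perm a_dom).
  by move=> t; apply: (unitH_right_idempotent_eq n_gt0 a_perm ran_far).
Qed.
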